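(* Let $a\geq 2$. For Lebesgue-almost every $x\in\Lambda^{a+1}$ we have $\lim_{k\to\infty}T_{a,1}^k(x)=(0,\ldots,0)$ and $\sigma(x)=\sum_{k=0}^{\infty}x_a^{(k)}$.
   Context: For $n\geq 1$ let $\Lambda^n=\{x\in\mathbb{R}^n : 0\leq x_1\leq\cdots\leq x_n\}$. The map $T_{a,1}:\Lambda^{a+1}\to\Lambda^{a+1}$ sends $x$ to the vector obtained by arranging $x_1,\ldots,x_a,\,x_{a+1}-x_a$ in nondecreasing order. Write $x^{(k)}=T_{a,1}^k(x)$ (so $x^{(0)}=x$) and $x^{(k)}_i$ for its $i$-th coordinate; $\sigma(x)=x_1+\cdots+x_{a+1}$. *)

From HB Require Import structures.
From mathcomp Require Import all_boot all_order all_algebra.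
From mathcomp Require Import all_classical all_reals all_analysis.
Set Implicit Arguments. Unset Strict Implicit. Unset Printing Implicit Defensive.

Import Order.TTheory GRing.Theory Num.Theory.
Import numFieldNormedType.Exports.
Local Open Scope classical_set_scope.
Local Open Scope ring_scope.

(* Coordinates x_1, ..., x_n of the paper are x ord0 0, ..., x ord0 (n-1). *)

Definition Lambda (R : realType) (n : nat) : set 'rV[R]_n :=
  [set x | (forall i : 'I_n, 0 <= x ord0 i) /\
           (forall i j : 'I_n, (i <= j)%N -> x ord0 i <= x ord0 j)].

Definition Ta1 (R : realType) (a : nat) (x : 'rV[R]_a.+1) : 'rV[R]_a.+1 :=
  let s := rcons [seq x ord0 (inord i) | i <- iota 0 a]
                 (x ord0 ord_max - x ord0 (inord a.-1)) in
  \row_(i < a.+1) nth 0 (sort <=%R s) i.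

Definition sigma (R : realType) (n : nat) (x : 'rV[R]_n) : R :=
  \sum_(i < n) x ord0 i.

Definition box_vol (R : realType) (n : nat) (lo hi : 'rV[R]_n) : R :=
  \prod_(i < n) (hi ord0 i - lo ord0 i).

Definition in_box (R : realType) (n : nat) (lo hi x : 'rV[R]_n) : Prop :=
  forall i : 'I_n, lo ord0 i <= x ord0 i <= hi ord0 i.

Definition lebesgue_null (R : realType) (n : nat) (A : set 'rV[R]_n) : Prop :=
  forall eps : R, 0 < eps ->
    exists lo hi : nat -> 'rV[R]_n,
      (forall k (i : 'I_n), lo k ord0 i <= hi k ord0 i) /\
      (forall x, A x -> exists k, in_box (lo k) (hi k) x) /\
      (forall N, \sum_(k < N) box_vol (lo k) (hi k) < eps).
Arguments Lambda {R} n _.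

(* A point with no nontrivial integer relation among its coordinates is
   Lebesgue-generic: the dependent points lie in countably many hyperplanes.
   Each [Ta1] step multiplies the row vector on the right by a unimodular
   integer matrix, so along the orbit of an independent point no coordinate
   ever vanishes.  Since [sigma] drops by exactly the penultimate coordinate
   [u_k] at every step, [sigma x^(k)] decreases to a limit [l >= 0], the series
   of the [u_k] converges to [sigma x - l] and [u_k --> 0].  If [l > 0], then
   eventually [(a+2) u_k <= sigma x^(k)], which forces the last coordinate to
   exceed [2 u_k]; the new coordinate [x_(a+1) - x_a] then sorts above [x_a], so
   [u] stays constant and positive, a contradiction.  Hence [l = 0], the series
   sums to [sigma x], and the orbit tends to [0] because [|x^(k)| <= sigma x^(k)]. *)

From HB Require Import structures.
From mathcomp Require Import all_boot all_order all_algebra.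
From mathcomp Require Import all_classical all_reals all_analysis.
From mathcomp.algebra_tactics Require Import ring lra.
From mathcomp Require Import zify perm.
Set Implicit Arguments. Unset Strict Implicit. Unset Printing Implicit Defensive.
Import Order.TTheory GRing.Theory Num.Theory.
Import numFieldNormedType.Exports.
Local Open Scope classical_set_scope.
Local Open Scope ring_scope.

Lemma sumr_le_uniq_subset (T : eqType) (R : numDomainType) (s t : seq T) (F : T -> R) :
  uniq s -> uniq t -> {subset s <= t} -> (forall x, 0 <= F x) ->
  \sum_(x <- s) F x <= \sum_(x <- t) F x.
Proof.
move=> us ut st F0; rewrite [leRHS](bigID (mem s)) /= -[X in _ <= X + _]big_filter.
have ts : perm_eq [seq x <- t | x \in s] s.
  apply: uniq_perm; rewrite ?filter_uniq // => x.
  by rewrite mem_filter andb_idr //; apply: st.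
by rewrite (perm_big _ ts) lerDl sumr_ge0.
Qed.

Lemma sumr_ord_le_support (R : numDomainType) (f : nat -> R) (m N : nat) :
  (forall k, 0 <= f k) -> (forall k, (m <= k)%N -> f k = 0) ->
  \sum_(k < N) f k <= \sum_(k < m) f k.
Proof.
move=> f0 fm.
have -> : \sum_(k < m) f k = \sum_(k < N + m) f k.
  rewrite (big_ord_widen (N + m) f (leq_addl N m)) [RHS](bigID (fun k : 'I__ => (k < m)%N)) /=.
  by rewrite [X in _ = _ + X]big1 ?addr0 // => k; rewrite -leqNgt => /fm.
rewrite (big_ord_widen (N + m) f (leq_addr m N)) [leRHS](bigID (fun k : 'I__ => (k < N)%N)) /=.
by rewrite lerDl sumr_ge0.
Qed.

Lemma sumr_uniq_pairs_le (R : numDomainType) (g : nat * nat -> R) (w : nat -> R)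
    (s : seq (nat * nat)) :
  uniq s -> (forall p, 0 <= g p) -> (forall i M, \sum_(m < M) g (i, val m) <= w i) ->
  exists M, \sum_(p <- s) g p <= \sum_(i < M) w i.
Proof.
move=> us g0 gw; pose M := (\max_(p <- s) maxn p.1 p.2).+1; exists M.
pose t := [seq (i, m) | i <- index_iota 0 M, m <- index_iota 0 M].
have st : {subset s <= t}.
  move=> [i m] ps; have := @leq_bigmax_seq _ s xpredT (fun p => maxn p.1 p.2) _ ps isT.
  rewrite geq_max => /andP[iM mM].
  by apply/allpairsP; exists (i, m); rewrite !mem_index_iota !ltnS iM mM.
have ut : uniq t by apply: allpairs_uniq; rewrite ?iota_uniq // => -[? ?] [? ?] _ _ [-> ->].
apply: (le_trans (sumr_le_uniq_subset us ut st g0)).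
rewrite big_allpairs big_mkord; apply: ler_sum => i _.
by rewrite big_mkord gw.
Qed.

Lemma series_geometric_half_lt (R : realFieldType) (eps : R) (M : nat) :
  0 < eps -> series (geometric (eps / 2) 2^-1) M < eps.
Proof.
move=> e0; rewrite geometric_seriesE ?invr_eq1 ?pnatr_eq1 //=.
have h0 : 0 < (2^-1 : R) ^+ M by rewrite exprn_gt0.
have -> : (1 - 2^-1 : R) = 2^-1 by field.
rewrite invrK mulrAC divfK ?pnatr_eq0 // mulrBr mulr1 ltrBlDr ltrDl.
exact: mulr_gt0.
Qed.

Section LebesgueNull.
Variables (R : realType) (n : nat).
Implicit Types A B : set 'rV[R]_n.+1.

Lemma box_vol0 : box_vol (0 : 'rV[R]_n.+1) 0 = 0.
Proof. by rewrite /box_vol big_ord_recl !mxE subrr mul0r. Qed.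

Lemma box_vol_ge0 (lo hi : 'rV[R]_n.+1) :
  (forall i, lo ord0 i <= hi ord0 i) -> 0 <= box_vol lo hi.
Proof. by move=> lohi; apply: prodr_ge0 => i _; rewrite subr_ge0. Qed.

Lemma lebesgue_null_subset A B : lebesgue_null B -> A `<=` B -> lebesgue_null A.
Proof.
move=> nB AB eps e0; have [lo [hi [lohi [cover vol]]]] := nB eps e0.
by exists lo, hi; split => //; split => // x /AB/cover.
Qed.

Lemma lebesgue_null0 : lebesgue_null (set0 : set 'rV[R]_n.+1).
Proof.
move=> eps e0; exists (fun=> 0), (fun=> 0); split; [|split] => // N.
by rewrite big1 // => k _; exact: box_vol0.
Qed.

Lemma lebesgue_null_finite_cover A :
  (forall eps, 0 < eps -> exists (T : finType) (lo hi : T -> 'rV[R]_n.+1),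
     [/\ forall t i, lo t ord0 i <= hi t ord0 i,
         forall x, A x -> exists t, in_box (lo t) (hi t) x &
         \sum_t box_vol (lo t) (hi t) < eps]) ->
  lebesgue_null A.
Proof.
move=> cov eps e0; have [T [lo [hi [lohi cover vol]]]] := cov eps e0.
pose lo' k := if insub k is Some t then lo (@enum_val T xpredT t) else 0.
pose hi' k := if insub k is Some t then hi (@enum_val T xpredT t) else 0.
have vol' : \sum_(k < #|T|) box_vol (lo' k) (hi' k) = \sum_t box_vol (lo t) (hi t).
  rewrite [RHS](eq_bigl (mem predT)) // [RHS](big_enum_val (A := predT)).
  by apply: eq_bigr => k _; rewrite /lo' /hi' valK.
exists lo', hi'; split; [|split].
- by move=> k i; rewrite /lo' /hi'; case: insub => [t|]; rewrite ?lohi ?mxE.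
- move=> x /cover [t xt]; exists (enum_rank t).
  by rewrite /lo' /hi' valK enum_rankK.
move=> N; rewrite -vol' in vol; apply: le_lt_trans vol.
apply: (@sumr_ord_le_support _ (fun k => box_vol (lo' k) (hi' k)) #|T|) => k.
  by rewrite /lo' /hi'; case: insub => [t|]; rewrite ?box_vol0 // box_vol_ge0.
by move=> Tk; rewrite /lo' /hi' insubN -?leqNgt // box_vol0.
Qed.

Lemma lebesgue_null_bigcup_nat (A : nat -> set 'rV[R]_n.+1) :
  (forall i, lebesgue_null (A i)) -> lebesgue_null (\bigcup_i A i).
Proof.
move=> nA eps e0.
pose w i := geometric (eps / 2) 2^-1 i.
have w0 i : 0 < w i by rewrite /w /= mulr_gt0 ?exprn_gt0 ?divr_gt0.
have covers i : exists p : (nat -> 'rV[R]_n.+1) * (nat -> 'rV[R]_n.+1),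
    [/\ forall k j, p.1 k ord0 j <= p.2 k ord0 j,
        forall x, A i x -> exists k, in_box (p.1 k) (p.2 k) x &
        forall M, \sum_(k < M) box_vol (p.1 k) (p.2 k) < w i].
  have [lo [hi [lohi [cover vol]]]] := nA i (w i) (w0 i).
  by exists (lo, hi); split.
have [F FP] := choice covers.
pose g p := box_vol ((F p.1).1 p.2) ((F p.1).2 p.2).
have g0 p : 0 <= g p by apply: box_vol_ge0; have [] := FP p.1.
pose lo k := if pickle_inv k : option (nat * nat) is Some p then (F p.1).1 p.2 else 0.
pose hi k := if pickle_inv k : option (nat * nat) is Some p then (F p.1).2 p.2 else 0.
exists lo, hi; split; [|split].
- move=> k j; rewrite /lo /hi; case: pickle_inv => [p|]; last by rewrite mxE.
  by have [] := FP p.1.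
- move=> x [i _ Aix]; have [_ /(_ x Aix)[m xm] _] := FP i; exists (pickle (i, m)).
  by rewrite /lo /hi pickleK_inv.
move=> N.
have -> : \sum_(k < N) box_vol (lo k) (hi k) =
          \sum_(p <- pmap (@pickle_inv (prod nat nat)) (iota 0 N)) g p.
  rewrite big_pmap -(subn0 N) -/(index_iota 0 N) big_mkord subn0; apply: eq_bigr => k _.
  by rewrite /lo /hi; case: pickle_inv => [p|] //=; rewrite box_vol0.
have us : uniq (pmap (@pickle_inv (prod nat nat)) (iota 0 N)).
  by rewrite (pmap_uniq (@pickle_invK _)) // iota_uniq.
have gw i M : \sum_(m < M) g (i, val m) <= w i by have [_ _ /(_ M)/ltW] := FP i.
have [M /le_lt_trans->//] := sumr_uniq_pairs_le us g0 gw.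
have -> : \sum_(i < M) w i = series (geometric (eps / 2) 2^-1) M.
  by rewrite /series /= big_mkord.
exact: series_geometric_half_lt.
Qed.

Lemma lebesgue_null_bigcup (I : countType) (A : I -> set 'rV[R]_n.+1) :
  (forall i, lebesgue_null (A i)) -> lebesgue_null (\bigcup_i A i).
Proof.
move=> nA; pose A' k := if pickle_inv k is Some i then A i else set0.
apply: (@lebesgue_null_subset _ (\bigcup_k A' k)).
  apply: lebesgue_null_bigcup_nat => k.
  by rewrite /A'; case: pickle_inv => //; apply: lebesgue_null0.
by move=> x [i _ xi]; exists (pickle i) => //; rewrite /A' pickleK_inv.
Qed.

End LebesgueNull.

Lemma in_box_centered (R : realType) n (z r x : 'rV[R]_n) :
  in_box (z - r) (z + r) x <-> forall i, `|x ord0 i - z ord0 i| <= r ord0 i.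
Proof.
by split=> xzr i; move: (xzr i); rewrite !mxE ler_distl.
Qed.

Lemma box_vol_centered (R : realType) n (z r : 'rV[R]_n) :
  box_vol (z - r) (z + r) = \prod_i (2 * r ord0 i).
Proof. by apply: eq_bigr => i _; rewrite !mxE; ring. Qed.

Lemma hyperplane_coord_close (R : realFieldType) n (c x z : 'rV[R]_n) j (d : R) :
  \sum_i x ord0 i * c ord0 i = 0 -> \sum_i z ord0 i * c ord0 i = 0 ->
  c ord0 j != 0 -> 0 <= d -> (forall i, i != j -> `|x ord0 i - z ord0 i| <= d) ->
  `|x ord0 j - z ord0 j| <= (\sum_i `|c ord0 i|) / `|c ord0 j| * d.
Proof.
move=> xc zc cj d0 xz.
have : \sum_i (x ord0 i - z ord0 i) * c ord0 i = 0.
  by under eq_bigr do rewrite mulrBl; rewrite sumrB xc zc subrr.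
rewrite (bigD1 j) //= => /eqP; rewrite addr_eq0 => /eqP dj.
rewrite mulrAC ler_pdivlMr ?normr_gt0 // -normrM dj normrN.
apply: (le_trans (ler_norm_sum _ _ _)); rewrite mulr_suml.
rewrite [leRHS](bigD1 j) //= ler_wpDl ?mulr_ge0 //; apply: ler_sum => i ij.
by rewrite normrM mulrC ler_wpM2l // xz.
Qed.

Section HyperplaneGrid.
Variables (R : realType) (n : nat) (c : 'rV[R]_n.+1) (j : 'I_n.+1) (B L : nat).
Hypotheses (cj_neq0 : c ord0 j != 0) (L_gt0 : (0 < L)%N).

Local Notation K := (2 * B * L)%N.
Local Notation C := ((\sum_i `|c ord0 i|) / `|c ord0 j|).

Let L0 : 0 < L%:R :> R. Proof. by rewrite ltr0n. Qed.

Definition grid_coord (t : {ffun 'I_n -> 'I_K.+1}) (i : 'I_n) : R :=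
  - B%:R + (t i)%:R / L%:R.

(* The coordinates other than [j] run over a grid of mesh [1/L] in [[-B, B]];
   the [j]-th one is then solved from the hyperplane equation. *)
Definition grid_point t : 'rV[R]_n.+1 :=
  \row_i if unlift j i is Some i' then grid_coord t i'
         else - (\sum_i' grid_coord t i' * c ord0 (lift j i')) / c ord0 j.

Definition grid_radius : 'rV[R]_n.+1 :=
  \row_i if unlift j i is Some _ then L%:R^-1 else C / L%:R.

Lemma grid_point_on_hyperplane t : \sum_i grid_point t ord0 i * c ord0 i = 0.
Proof.
rewrite (bigD1_ord j) //= mxE unlift_none divfK //.
by under eq_bigr do rewrite mxE liftK; rewrite addNr.
Qed.

Lemma grid_covers (x : 'rV[R]_n.+1) :
  \sum_i x ord0 i * c ord0 i = 0 -> (forall i, `|x ord0 i| <= B%:R) ->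
  exists t, forall i, `|x ord0 i - grid_point t ord0 i| <= grid_radius ord0 i.
Proof.
move=> xc xB.
pose t : {ffun 'I_n -> 'I_K.+1} :=
  [ffun i' => inord (Num.truncn ((x ord0 (lift j i') + B%:R) * L%:R))].
have near i' : `|x ord0 (lift j i') - grid_coord t i'| <= L%:R^-1.
  have xB0 : 0 <= (x ord0 (lift j i') + B%:R) * L%:R.
    by rewrite mulr_ge0 // -lerBlDr sub0r; have := xB (lift j i'); rewrite ler_norml => /andP[].
  have /andP[lo hi] := truncn_itv xB0.
  rewrite /grid_coord ffunE inordK; last first.
    rewrite ltnS truncn_le_nat (le_lt_trans (y := (2 * B * L)%:R)) ?ltr_nat //.
    rewrite !natrM ler_pM2r //; have := xB (lift j i'); rewrite ler_norml => /andP[_]; lra.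
  set y := _ * L%:R in lo hi *; set tau := Num.truncn y in lo hi *.
  have -> : x ord0 (lift j i') - (- B%:R + tau%:R / L%:R) = (y - tau%:R) / L%:R.
    by rewrite /y; field; rewrite lt0r_neq0.
  rewrite ger0_norm ?divr_ge0 ?subr_ge0 // -[leRHS]mul1r ler_wpM2r ?invr_ge0 //.
  by move: hi; rewrite -natr1; lra.
exists t => i; rewrite [grid_radius ord0 i]mxE; case: unliftP => [i' ->|->].
  by rewrite [grid_point _ _ _]mxE liftK.
apply: hyperplane_coord_close => //; first exact: grid_point_on_hyperplane.
by move=> k; rewrite eq_sym => /unlift_some[k' -> _]; rewrite [grid_point _ _ _]mxE liftK.
Qed.

Lemma grid_cells_vol :
  \sum_(t : {ffun 'I_n -> 'I_K.+1})
    box_vol (grid_point t - grid_radius) (grid_point t + grid_radius)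
  <= 2 * C / L%:R * (4 * B + 2)%:R ^+ n.
Proof.
have vol t : box_vol (grid_point t - grid_radius) (grid_point t + grid_radius)
             = 2 * C / L%:R * (2 / L%:R) ^+ n.
  rewrite box_vol_centered (bigD1_ord j) //= mxE unlift_none.
  have -> : \prod_(i < n) (2 * grid_radius ord0 (lift j i)) = (2 / L%:R) ^+ n.
    rewrite -[in RHS](card_ord n) -prodr_const.
    by apply: eq_bigr => i _; rewrite mxE liftK.
  by rewrite !mulrA.
under eq_bigr do rewrite vol.
rewrite sumr_const card_ffun !card_ord -[leLHS]mulr_natl natrX mulrC -[leLHS]mulrA -exprMn.
rewrite ler_wpM2l ?divr_ge0 ?mulr_ge0 ?sumr_ge0 //.
rewrite lerXn2r ?nnegrE ?mulr_ge0 ?divr_ge0 //.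
rewrite mulrAC ler_pdivrMr // -!natrM ler_nat; nia.
Qed.

End HyperplaneGrid.

Lemma row_neq0 (R : zmodType) n (c : 'rV[R]_n) : c != 0 -> exists j, c ord0 j != 0.
Proof.
move=> c0; apply/existsP; apply: contraNT c0 => /existsPn c0.
by apply/eqP/rowP => j; rewrite mxE; apply/eqP/negPn/c0.
Qed.

Lemma lebesgue_null_hyperplane_cube (R : realType) n (c : 'rV[R]_n.+1) (B : nat) :
  c != 0 ->
  lebesgue_null [set x : 'rV[R]_n.+1 | x *m c^T = 0 /\ forall i, `|x ord0 i| <= B%:R].
Proof.
move=> /row_neq0[j cj]; apply: lebesgue_null_finite_cover => eps e0.
pose V : R := 2 * ((\sum_i `|c ord0 i|) / `|c ord0 j|) * (4 * B + 2)%:R ^+ n.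
pose L := (Num.truncn (V / eps)).+1.
have L0 : (0 < L)%N by [].
pose r := grid_radius c j L.
have r0 i : 0 <= r ord0 i.
  by rewrite mxE; case: unlift => [_|]; rewrite ?invr_ge0 // !divr_ge0 ?sumr_ge0.
exists {ffun 'I_n -> 'I_(2 * B * L).+1}, (fun t => grid_point c j t - r),
  (fun t => grid_point c j t + r); split.
- by move=> t i; move: (r0 i); rewrite !mxE; lra.
- move=> x [/(congr1 (fun M : 'M[R]_1 => M ord0 ord0)) xc xB].
  have xc' : \sum_i x ord0 i * c ord0 i = 0.
    by rewrite !mxE in xc; apply: etrans xc; apply: eq_bigr => i _; rewrite mxE.
  by have [t xt] := grid_covers cj L0 xc' xB; exists t; apply/in_box_centered.
apply: le_lt_trans (grid_cells_vol B cj L0) _.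
rewrite mulrAC -/V ltr_pdivrMr ?ltr0n // -ltr_pdivrMl //.
by rewrite mulrC; apply: truncnS_gt.
Qed.

Section Ta1Map.
Variables (R : realType) (a : nat).
Hypothesis a_gt0 : (0 < a)%N.
Implicit Types y : 'rV[R]_a.+1.

Local Notation j0 := (inord a.-1 : 'I_a.+1).

Lemma penult_val : (j0 : nat) = a.-1.
Proof. by rewrite inordK // ltnS leq_pred. Qed.

Lemma penult_neq_max : j0 != ord_max.
Proof. by rewrite -val_eqE /= penult_val; apply/eqP; lia. Qed.

Definition Ta1_unsorted y : 'rV[R]_a.+1 :=
  \row_k (y ord0 k - (k == ord_max)%:R * y ord0 j0).

Definition Ta1_seq y : seq R :=
  rcons [seq y ord0 (inord i) | i <- iota 0 a] (y ord0 ord_max - y ord0 j0).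

Lemma Ta1E y i : Ta1 y ord0 i = nth 0 (sort <=%R (Ta1_seq y)) i.
Proof. by rewrite mxE. Qed.

Lemma size_Ta1_seq y : size (Ta1_seq y) = a.+1.
Proof. by rewrite size_rcons size_map size_iota. Qed.

Lemma nth_Ta1_seq y (k : 'I_a.+1) : nth 0 (Ta1_seq y) k = Ta1_unsorted y ord0 k.
Proof.
rewrite nth_rcons size_map size_iota mxE; case: ltnP => [ka|ak].
  rewrite (nth_map 0%N) ?size_iota // nth_iota // add0n.
  have -> : (k == ord_max) = false by apply/negbTE; rewrite -val_eqE /= neq_ltn ka.
  by rewrite mul0r subr0; congr (y _ _); apply: val_inj; rewrite /= inordK.
have -> : k = ord_max by apply: val_inj => /=; have := ltn_ord k; lia.
by rewrite !eqxx mul1r.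
Qed.

Lemma Ta1_perm y : exists p : 'S_a.+1, Ta1 y = col_perm p (Ta1_unsorted y).
Proof.
have sz : size (Ta1_seq y) == a.+1 by rewrite size_Ta1_seq.
have /tuple_permP[p sortE] : perm_eq (sort <=%R (Ta1_seq y)) (Tuple sz) by rewrite perm_sort.
exists p; apply/rowP => i; rewrite Ta1E sortE nth_mktuple mxE.
by rewrite (tnth_nth 0) nth_Ta1_seq.
Qed.

Lemma sigma_Ta1_unsorted y : sigma (Ta1_unsorted y) = sigma y - y ord0 j0.
Proof.
rewrite /sigma; under eq_bigr do rewrite mxE.
rewrite sumrB; congr (_ - _).
rewrite (bigD1 ord_max) //= eqxx mul1r big1 ?addr0 // => i /negbTE->.
by rewrite mul0r.
Qed.

Lemma sigma_Ta1 y : sigma (Ta1 y) = sigma y - y ord0 j0.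
Proof.
have [p ->] := Ta1_perm y; rewrite -sigma_Ta1_unsorted /sigma.
under eq_bigr do rewrite mxE.
by rewrite [RHS](reindex_inj (@perm_inj _ p)).
Qed.

Lemma Lambda_Ta1 y : Lambda a.+1 y -> Lambda a.+1 (Ta1 y).
Proof.
move=> [y0 ymon]; split=> [i|i k ik].
  have [p ->] := Ta1_perm y; rewrite !mxE.
  case: eqP => [->|_]; last by rewrite mul0r subr0.
  by rewrite mul1r subr_ge0; apply: ymon; exact: leq_ord.
rewrite !Ta1E; apply: le_sorted_leq_nth => //; first exact: (sort_sorted (@le_total _ R)).
  by rewrite inE size_sort size_Ta1_seq.
by rewrite inE size_sort size_Ta1_seq.
Qed.

Lemma sorted_Ta1_seq y : Lambda a.+1 y -> y ord0 j0 <= y ord0 ord_max - y ord0 j0 ->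
  sorted <=%R (Ta1_seq y).
Proof.
move=> [_ ymon] yj0; apply/(sortedP 0) => i; rewrite size_Ta1_seq => ia.
have ia' : (i < a.+1)%N by apply: ltnW.
rewrite -[i]/(val (Ordinal ia')) -[i.+1]/(val (Ordinal ia)) !nth_Ta1_seq !mxE.
have -> : (Ordinal ia' == ord_max) = false by apply/negbTE; rewrite -val_eqE /= neq_ltn -ltnS ia.
rewrite mul0r subr0; case: (eqVneq (Ordinal ia) ord_max) => [ia_max|ia_max].
  have -> : Ordinal ia' = j0.
    by apply: val_inj; move/(congr1 val): ia_max; rewrite /= penult_val; lia.
  by rewrite ia_max mul1r.
by rewrite mul0r subr0; apply: ymon.
Qed.

Lemma Ta1_penult_fixed y : Lambda a.+1 y -> y ord0 j0 <= y ord0 ord_max - y ord0 j0 ->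
  Ta1 y ord0 j0 = y ord0 j0.
Proof.
move=> yL yj0; rewrite Ta1E (sorted_sort le_trans (sorted_Ta1_seq yL yj0)).
by rewrite nth_Ta1_seq mxE (negbTE penult_neq_max) mul0r subr0.
Qed.

Lemma sigma_le_penult y : Lambda a.+1 y -> sigma y <= a%:R * y ord0 j0 + y ord0 ord_max.
Proof.
move=> [_ ymon]; rewrite /sigma big_ord_recr lerD2r /=.
have -> : a%:R * y ord0 j0 = \sum_(i < a) y ord0 j0 by rewrite sumr_const card_ord mulr_natl.
apply: ler_sum => i _; apply: ymon.
by rewrite /= penult_val; have := ltn_ord i; lia.
Qed.

(* Once [y_a] is small compared with [sigma y], the last entry dominates [2 y_a]
   and [Ta1] leaves [y_a] in place. *)
Lemma Ta1_penult_stable y : Lambda a.+1 y -> a.+2%:R * y ord0 j0 <= sigma y ->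
  Ta1 y ord0 j0 = y ord0 j0.
Proof.
move=> yL ysig; apply: Ta1_penult_fixed => //; have := sigma_le_penult yL.
by move: ysig; rewrite -addn2 natrD; lra.
Qed.

Lemma Ta1_mulmx y : exists2 M : 'M[int]_a.+1, M \in unitmx & Ta1 y = y *m map_mx intr M.
Proof.
pose E : 'M[int]_a.+1 := 1%:M - delta_mx j0 ord_max.
have Eu : E \in unitmx.
  apply: (proj1 (@mulmx1_unit _ _ E (1%:M + delta_mx j0 ord_max) _)).
  rewrite /E mulmxBl mulmxDr !mul1mx mulmxDr mulmx1 mul_delta_mx_0 ?addr0 ?addrK //.
  by rewrite eq_sym penult_neq_max.
have [p ->] := Ta1_perm y; exists (E *m perm_mx p^-1).
  by rewrite unitmx_mul Eu unitmx_perm.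
rewrite col_permE map_mxM map_perm_mx mulmxA; congr (_ *m _).
apply/rowP => k; rewrite /E map_mxB map_mx1 map_delta_mx mulmxBr mulmx1 !mxE.
congr (_ - _); rewrite (bigD1 j0) //= !mxE eqxx big1 ?addr0.
  by rewrite mulrC andTb; case: eqP.
by move=> i /negbTE ij0; rewrite mxE ij0 mulr0.
Qed.
End Ta1Map.

Section IntDependence.
Variables (R : realType) (n : nat).
Implicit Types x : 'rV[R]_n.

Definition int_dependent x : Prop :=
  exists2 c : 'rV[int]_n, c != 0 & x *m (map_mx intr c)^T = 0.

Lemma int_dependent_mulmx (M : 'M[int]_n) x : M \in unitmx ->
  int_dependent (x *m map_mx intr M) -> int_dependent x.
Proof.
move=> Mu [c c0 xMc]; exists (c *m M^T).
  apply: contra c0 => /eqP cM0; apply/eqP.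
  by rewrite -(mulmxK (_ : M^T \in unitmx) c) ?unitmx_tr // cM0 mul0mx.
by rewrite map_mxM trmx_mul map_trmx trmxK mulmxA.
Qed.

Lemma int_independent_coord_neq0 x i : ~ int_dependent x -> x ord0 i != 0.
Proof.
move=> xI; apply/eqP => xi0; apply: xI; exists (delta_mx 0 i).
  by apply/eqP => /rowP/(_ i); rewrite !mxE !eqxx.
rewrite map_delta_mx trmx_delta -colE; apply/rowP => k.
by rewrite (ord1 k) !mxE.
Qed.

End IntDependence.

Lemma lebesgue_null_int_dependent (R : realType) n :
  lebesgue_null [set x : 'rV[R]_n.+1 | int_dependent x].
Proof.
pose A (p : {c : 'rV[int]_n.+1 | c != 0} * nat) :=
  [set x : 'rV[R]_n.+1 | x *m (map_mx intr (val p.1))^T = 0 /\ forall i, `|x ord0 i| <= p.2%:R].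
apply: (@lebesgue_null_subset _ _ _ (\bigcup_p A p)).
  apply: lebesgue_null_bigcup => -[[c c0] B]; apply: lebesgue_null_hyperplane_cube => /=.
  apply: contra c0 => /eqP/matrixP cij; apply/eqP/matrixP => i j.
  by have := cij i j; rewrite !mxE => /eqP; rewrite intr_eq0 => /eqP.
move=> x [c c0 xc]; exists (exist _ c c0, (Num.truncn (\sum_i `|x ord0 i|)).+1) => //.
split=> // i; apply: ltW; apply: le_lt_trans (truncnS_gt _).
by rewrite (bigD1 i) //= lerDl sumr_ge0.
Qed.

Lemma mx_norm_le_sigma (R : realType) n (y : 'rV[R]_n) : Lambda n y -> `|y| <= sigma y.
Proof.
move=> [y0 _]; have S0 : 0 <= sigma y by apply: sumr_ge0.
change (mx_norm y <= sigma y); rewrite mx_normrE; apply: bigmax_le => // -[i j] _ /=.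
by rewrite (ord1 i) ger0_norm // /sigma (bigD1 j) //= lerDl sumr_ge0.
Qed.

Section Orbit.
Variables (R : realType) (a : nat) (x : 'rV[R]_a.+1).
Hypotheses (a_gt0 : (0 < a)%N) (xL : Lambda a.+1 x) (xI : ~ int_dependent x).

Local Notation y k := (iter k (@Ta1 R a) x).
Let u k := y k ord0 (inord a.-1).
Let S k := sigma (y k).

Lemma Lambda_iter_Ta1 k : Lambda a.+1 (y k).
Proof. by elim: k => //= k; apply: Lambda_Ta1. Qed.

Lemma int_independent_iter_Ta1 k : ~ int_dependent (y k).
Proof.
elim: k => //= k IHk; have [M Mu ->] := Ta1_mulmx a_gt0 (y k).
by move/(int_dependent_mulmx Mu).
Qed.

Let u_gt0 k : 0 < u k.
Proof.
have [y0 _] := Lambda_iter_Ta1 k.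
by rewrite lt0r int_independent_coord_neq0 ?y0 //; apply: int_independent_iter_Ta1.
Qed.

Let S_succ k : S k.+1 = S k - u k.
Proof. exact: sigma_Ta1. Qed.

Let series_u k : series u k = S 0%N - S k.
Proof.
elim: k => [|k IHk]; first by rewrite /series /= big_geq // subrr.
by have := seriesSB u k; rewrite IHk S_succ; lra.
Qed.

Let S_noninc : nonincreasing_seq S.
Proof. by apply/nonincreasing_seqP => k; rewrite S_succ lerBlDr lerDl ltW. Qed.

Let S_cvg : cvgn S.
Proof.
apply: nonincreasing_is_cvgn S_noninc _; exists 0 => _ [k _ <-].
by apply: sumr_ge0 => i _; have [y0 _] := Lambda_iter_Ta1 k; apply: y0.
Qed.

Let u_cvg0 : u @ \oo --> 0.
Proof.
apply: cvg_series_cvg_0; rewrite (funext series_u).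
by apply: is_cvgB; [exact: is_cvg_cst | exact: S_cvg].
Qed.

(* If [lim S > 0] then eventually [u] is too small to move under [Ta1], so [u]
   would be eventually constant and positive, contradicting [u --> 0]. *)
Lemma sigma_iter_Ta1_cvg0 : S @ \oo --> 0.
Proof.
have S_ge_lim k : limn S <= S k := nonincreasing_cvgn_ge S_noninc S_cvg k.
have lim_ge0 : 0 <= limn S.
  apply: limr_ge S_cvg _; apply: nearW => k.
  by apply: sumr_ge0 => i _; have [y0 _] := Lambda_iter_Ta1 k; apply: y0.
suff lim0 : limn S = 0 by rewrite -lim0; exact: S_cvg.
apply/eqP; rewrite eq_le lim_ge0 andbT leNgt; apply/negP => lim_gt0.
have [K _ u_small] := @cvgr0_norm_lt _ _ _ _ _ u u_cvg0 _ (divr_gt0 lim_gt0 (ltr0Sn _ a.+1)).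
have u_succ k : (K <= k)%N -> u k.+1 = u k.
  move=> Kk; apply: Ta1_penult_stable (Lambda_iter_Ta1 k) _ => //.
  have := u_small k Kk; rewrite /= ger0_norm ?(ltW (u_gt0 k)) // ltr_pdivlMr ?ltr0n // => uk.
  change (a.+2%:R * u k <= S k); rewrite mulrC.
  exact: ltW (lt_le_trans uk (S_ge_lim k)).
have u_const d : u (K + d)%N = u K.
  by elim: d => [|d IHd]; rewrite ?addn0 // addnS u_succ ?IHd // leq_addr.
have [K2 _ u_lt] := @cvgr0_norm_lt _ _ _ _ _ u u_cvg0 _ (u_gt0 K).
by have := u_lt (K + K2)%N (leq_addl _ _); rewrite /= u_const ger0_norm ?ltxx // ltW.
Qed.

Lemma iter_Ta1_cvg0 : (fun k => y k) @ \oo --> (0 : 'rV[R]_a.+1).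
Proof.
apply: norm_cvg0; apply: (@squeeze_cvgr _ _ _ _ (cst 0) S) => //.
- apply: nearW => k; rewrite normr_ge0; exact: mx_norm_le_sigma (Lambda_iter_Ta1 k).
- exact: cvg_cst.
exact: sigma_iter_Ta1_cvg0.
Qed.

Lemma series_penult_iter_Ta1 : series u @ \oo --> sigma x.
Proof.
rewrite (funext series_u) -[sigma x]subr0.
by apply: cvgB; [exact: cvg_cst | exact: sigma_iter_Ta1_cvg0].
Qed.

End Orbit.

Theorem corollary4p4 (R : realType) (a : nat) (ha : (2 <= a)%N) :
  exists N : set 'rV[R]_a.+1, lebesgue_null N /\
    forall x : 'rV[R]_a.+1, Lambda a.+1 x -> ~ N x ->
      ((fun k : nat => iter k (@Ta1 R a) x) @ \oo --> (0 : 'rV[R]_a.+1)) /\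
      ((series (fun k : nat => (iter k (@Ta1 R a) x) ord0 (inord a.-1)))
         @ \oo --> sigma x).
Proof.
exists [set x | int_dependent x]; split; first exact: lebesgue_null_int_dependent.
have a_gt0 : (0 < a)%N by apply: leq_trans ha.
move=> x xL xI; split; first exact: iter_Ta1_cvg0.
exact: series_penult_iter_Ta1.
Qed.
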